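(* For any generalized causal team $T$ over a signature $\sigma$: $T\models^g\bigsqcup_{\mathcal F\in\mathbb F_\sigma}\Phi^{\mathcal F}$ if and only if $T$ is uniform.
   Context: A signature $\sigma=(\mathrm{Dom},\mathrm{Ran})$: $\mathrm{Dom}$ nonempty finite set of variables, each with nonempty finite range $\mathrm{Ran}(X)$; $\mathbf X=\mathbf x$ abbreviates $X_1=x_1\wedge\dots\wedge X_n=x_n$ ($\mathbf x\in\mathrm{Ran}(\mathbf X)=\prod\mathrm{Ran}(X_i)$), inconsistent if it contains $X=x,X=x'$ with $x\neq x'$. $\mathcal{CO}[\sigma]$-formulas: $\alpha::=X=x\mid\neg\alpha\mid\alpha\wedge\alpha\mid\alpha\vee\alpha\mid\mathbf X=\mathbf x\;\Box\!\!\rightarrow\alpha$; $\alpha\supset\beta$ abbreviates $\neg\alpha\vee\beta$; $\sqcup$ is the global disjunction ($T\models\varphi\sqcup\psi$ iff $T\models\varphi$ or $T\models\psi$), $\bigsqcup$ its iterated form. A system of functions $\mathcal F$: for each $V\in\mathrm{En}(\mathcal F)\subseteq\mathrm{Dom}$ parents $PA^{\mathcal F}_V\subseteq\mathrm{Dom}\setminus\{V\}$ and $\mathcal F_V:\mathrm{Ran}(PA^{\mathcal F}_V)\to\mathrm{Ran}(V)$; $\mathrm{Ex}(\mathcal F)=\mathrm{Dom}\setminus\mathrm{En}(\mathcal F)$; only recursive (acyclic parent graph) systems, forming the finite set $\mathbb F_\sigma$. An assignment $s$ ($s(X)\in\mathrm{Ran}(X)$) is compatible with $\mathcal F$ if $s(V)=\mathcal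 F_V(s(PA^{\mathcal F}_V))$ for $V\in\mathrm{En}(\mathcal F)$. A generalized causal team is a set $T$ of pairs $(s,\mathcal F)$ with $\mathcal F\in\mathbb F_\sigma$ and $s$ compatible with $\mathcal F$; $T^-=\{s:(s,\mathcal F)\in T\}$. For consistent $\mathbf X=\mathbf x$: $\mathcal F_{\mathbf X=\mathbf x}$ restricts $\mathcal F$ to $\mathrm{En}(\mathcal F)\setminus\mathbf X$; $s^{\mathcal F}_{\mathbf X=\mathbf x}$: $X_i\mapsto x_i$, $V\mapsto s(V)$ for $V\in\mathrm{Ex}(\mathcal F)\setminus\mathbf X$, $V\mapsto\mathcal F_V(s^{\mathcal F}_{\mathbf X=\mathbf x}(PA^{\mathcal F}_V))$ for $V\in\mathrm{En}(\mathcal F)\setminus\mathbf X$; $T_{\mathbf X=\mathbf x}=\{(s^{\mathcal F}_{\mathbf X=\mathbf x},\mathcal F_{\mathbf X=\mathbf x}):(s,\mathcal F)\in T\}$. $\models^g$: $T\models X=x$ iff $s(X)=x$ for all $s\in T^-$; $T\models\neg\alpha$ iff $\{(s,\mathcal F)\}\not\models\alpha$ for all $(s,\mathcal F)\in T$; $\wedge$ classical; $T\models\varphi\vee\psi$ iff $T=T_1\cup T_2$ with $T_1\models\varphi$, $T_2\models\psi$; $T\models\mathbf X=\mathbf x\;\Box\!\!\rightarrow\varphi$ iff $\mathbf X=\mathbf x$ inconsistent or $T_{\mathbf X=\mathbf x}\models\varphi$. $\mathrm{Cn}(\mathcal F)$ = $\{V\in\mathrm{En}(\mathcal F):\mathcal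 F_V\text{ constant}\}$. $\mathcal F_V\sim\mathcal G_V$ iff $\mathcal F_V(\mathbf x\mathbf y)=\mathcal G_V(\mathbf x\mathbf z)$ for all $\mathbf x\in\mathrm{Ran}(PA^{\mathcal F}_V\cap PA^{\mathcal G}_V)$, $\mathbf y\in\mathrm{Ran}(PA^{\mathcal F}_V\setminus PA^{\mathcal G}_V)$, $\mathbf z\in\mathrm{Ran}(PA^{\mathcal G}_V\setminus PA^{\mathcal F}_V)$; $\mathcal F\sim\mathcal G$ iff $\mathrm{En}(\mathcal F)\setminus\mathrm{Cn}(\mathcal F)=\mathrm{En}(\mathcal G)\setminus\mathrm{Cn}(\mathcal G)$ and $\mathcal F_V\sim\mathcal G_V$ for each such $V$. $T$ is uniform if $\mathcal F\sim\mathcal G$ for all $(s,\mathcal F),(t,\mathcal G)\in T$ (the empty team is uniform). With $\mathbf W_V$ listing $\mathrm{Dom}\setminus\{V\}$: $\Phi^{\mathcal F}:=\bigwedge_{V\in\mathrm{En}(\mathcal F)\setminus\mathrm{Cn}(\mathcal F)}\eta(V)\wedge\bigwedge_{V\notin\mathrm{En}(\mathcal F)\setminus\mathrm{Cn}(\mathcal F)}\xi(V)$, where $\eta(V)$ is the conjunction of all $(\mathbf W=\mathbf w\wedge PA^{\mathcal F}_V=\mathbf p)\;\Box\!\!\rightarrow V=\mathcal F_V(\mathbf p)$ ($\mathbf W$ listing $\mathrm{Dom}\setminus(PA^{\mathcal F}_V\cup\{V\})$, $\mathbf w\in\mathrm{Ran}(\mathbf W)$, $\mathbf p\in\mathrm{Ran}(PA^{\mathcal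 F}_V)$) and $\xi(V)$ is the conjunction of all $V=v\supset(\mathbf W_V=\mathbf w\;\Box\!\!\rightarrow V=v)$ ($v\in\mathrm{Ran}(V)$, $\mathbf w\in\mathrm{Ran}(\mathbf W_V)$). *)

From mathcomp Require Import all_boot.

Set Implicit Arguments.
Unset Strict Implicit.
Unset Printing Implicit Defensive.

(* A signature: nonempty finite set of variables Dom, each with a nonempty
   finite range.  Nonemptiness is recorded by witnesses. *)
Record signature := Signature {
  Dom : finType;
  Ran : Dom -> finType;
  dom_wit : Dom;
  ran_wit : forall X : Dom, Ran X
}.

Section CausalTeams.
Variable sg : signature.
Local Notation D := (Dom sg).
Local Notation Rn := (@Ran sg).

Definition asg := forall X : D, Rn X.
(* finite enumeration of assignments (used to build finite conjunctions) *)
Definition fasg := {dffun forall X : D, Rn X}.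

Definition ranset (P : {set D}) :=
  {dffun forall Y : {Y : D | Y \in P}, Rn (sval Y)}.

Definition restr (s : asg) (P : {set D}) : ranset P :=
  @finfun _ (fun Y : {Y : D | Y \in P} => Rn (sval Y)) (fun Y => s (sval Y)).

(* A system of functions: endogenous set En, parents PA_V, and functions
   F_V : Ran(PA_V) -> Ran(V).  (PA_V and F_V are only meaningful for V in En.) *)
Record sys := Sys {
  En : {set D};
  PA : D -> {set D};
  Fn : forall V : D, ranset (PA V) -> Rn V
}.
Arguments Fn : clear implicits.

(* recursive = acyclic parent graph (witnessed by a strictly increasing rank) *)
Definition recursive (F : sys) : Prop :=
  exists r : D -> nat, forall V Y, V \in En F -> Y \in PA F V -> r Y < r V.

Definition compatible (s : asg) (F : sys) : Prop :=
  forall V, V \in En F -> s V = Fn F V (restr s (PA F V)).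

Definition lit := {X : D & Rn X}.

Inductive form :=
| FEq (X : D) (x : Rn X)
| FNeg (a : form)
| FAnd (a b : form)
| FOr (a b : form)
| FCf (ant : seq lit) (a : form).

Definition FImp (a b : form) := FOr (FNeg a) b.

Definition inconsistent (ant : seq lit) : bool :=
  has (fun a => has (fun b => (tag a == tag b) && (a != b)) ant) ant.

Definition lit_at (V : D) (a : lit) : option (Rn V) :=
  match tag a =P V with
  | ReflectT e => Some (eq_rect (tag a) Rn (tagged a) V e)
  | ReflectF _ => None
  end.

Definition lookup (ant : seq lit) (V : D) : option (Rn V) :=
  foldr (fun a r => if lit_at V a is Some x then Some x else r) None ant.

Definition sys_int (ant : seq lit) (F : sys) : sys :=
  Sys (En F :\: [set V | lookup ant V != None]) (Fn F).

Definition int_step (ant : seq lit) (F : sys) (s t : asg) : asg :=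
  fun V => match lookup ant V with
           | Some x => x
           | None => if V \in En F then Fn F V (restr t (PA F V)) else s V
           end.

(* s^F_{X=x}: for recursive F, #|Dom| iterations reach the unique solution of
   the recursive definition in the paper. *)
Definition asg_int (ant : seq lit) (F : sys) (s : asg) : asg :=
  iter #|D| (int_step ant F s) s.

Definition team := asg -> sys -> Prop.

Definition gcteam (T : team) : Prop :=
  forall s F, T s F -> recursive F /\ compatible s F.

Definition single (s : asg) (F : sys) : team := fun s' F' => s' = s /\ F' = F.

Definition team_int (ant : seq lit) (T : team) : team :=
  fun t G => exists s F, T s F /\ t = asg_int ant F s /\ G = sys_int ant F.

Fixpoint sat (phi : form) (T : team) {struct phi} : Prop :=
  match phi with
  | FEq X x => forall s F, T s F -> s X = x
  | FNeg a => forall s F, T s F -> ~ sat a (single s F)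
  | FAnd a b => sat a T /\ sat b T
  | FOr a b => exists T1 T2 : team,
      (forall s F, T s F <-> (T1 s F \/ T2 s F)) /\ sat a T1 /\ sat b T2
  | FCf ant a => inconsistent ant \/ sat a (team_int ant T)
  end.

Definition constb (F : sys) (V : D) : bool :=
  [forall p : ranset (PA F V), forall q : ranset (PA F V), Fn F V p == Fn F V q].

Definition nonconst (F : sys) (V : D) : bool := (V \in En F) && ~~ constb F V.

Definition simV (F G : sys) (V : D) : Prop :=
  forall (p : ranset (PA F V)) (q : ranset (PA G V)),
    (forall Y (h1 : Y \in PA F V) (h2 : Y \in PA G V),
        p (exist _ Y h1) = q (exist _ Y h2)) ->
    Fn F V p = Fn G V q.

Definition simsys (F G : sys) : Prop :=
  (forall V, nonconst F V = nonconst G V) /\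
  (forall V, nonconst F V -> simV F G V).

Definition uniform (T : team) : Prop :=
  forall s F t G, T s F -> T t G -> simsys F G.

(* the formula T (tautology) used for the (never occurring) empty conjunction *)
Definition FTop : form :=
  FOr (FNeg (FEq (@ran_wit sg (dom_wit sg)))) (FEq (@ran_wit sg (dom_wit sg))).

Definition bigAnd (l : seq form) : form :=
  if l is a :: l' then foldl FAnd a l' else FTop.

Definition ant_except (V : D) (u : fasg) : seq lit :=
  [seq Tagged Rn (u Y) | Y <- enum D & Y != V].

(* eta(V): all (W = w /\ PA_V = p) []-> V = F_V(p); the pair (w, p) ranges over
   the assignments of Dom \ {V}, enumerated via full assignments u. *)
Definition eta (F : sys) (V : D) : form :=
  bigAnd [seq FCf (ant_except V u) (FEq (Fn F V (restr (fun X => u X) (PA F V))))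
         | u <- enum {: fasg}].

Definition xi (V : D) : form :=
  bigAnd [seq FImp (FEq v) (FCf (ant_except V u) (FEq v))
         | v <- enum (Rn V), u <- enum {: fasg}].

Definition Phi (F : sys) : form :=
  bigAnd [seq (if nonconst F V then eta F V else xi V) | V <- enum D].

Definition sat_bigsqcup_Phi (T : team) : Prop :=
  exists F : sys, recursive F /\ sat (Phi F) T.

End CausalTeams.

From mathcomp Require Import all_boot.
From Stdlib Require Import Classical.

Set Implicit Arguments.
Unset Strict Implicit.
Unset Printing Implicit Defensive.

(* Intervening on all variables but V with values u, a recursive system G sets
   V to G_V(u(PA_V)) if V is endogenous and leaves s(V) otherwise; when s is
   compatible with G this is G_V(u(PA_V)) for V in En(G) \ Cn(G) and s(V) for
   every other V.  All formulas of Phi^F are flat, so T satisfies Phi^F iff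
   every (s, G) in T produces the values that F prescribes, and comparing these
   values over all u is exactly G ~ F.  The same comparison shows that ~ is an
   equivalence relation; hence T satisfies some Phi^F iff T is uniform, taking
   for F any system of T (or any recursive system when T is empty). *)

Section Uniformity.
Variable sg : signature.
Local Notation D := (Dom sg).
Local Notation Rn := (@Ran sg).
Implicit Types (T : team sg) (F G H : sys sg) (s : asg sg) (u : fasg sg) (V : D).

Definition pointwise (phi : form sg) (P : asg sg -> sys sg -> Prop) :=
  forall T, sat phi T <-> forall s F, T s F -> P s F.

Lemma pointwise_iff phi P Q :
  pointwise phi P -> (forall s F, P s F <-> Q s F) -> pointwise phi Q.
Proof.
by move=> hP PQ T; split=> [/hP H s F /H /PQ | H]; last apply/hP => s F /H /PQ.
Qed.

Lemma pointwise_FEq X (x : Rn X) : pointwise (FEq x) (fun s _ => s X = x).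
Proof. by []. Qed.

Lemma pointwise_FImp_FEq V (v : Rn V) phi P : pointwise phi P ->
  pointwise (FImp (FEq v) phi) (fun s F => s V = v -> P s F).
Proof.
move=> hP T; split.
- move=> [T1 [T2 [defT [sat1 /hP sat2]]]] s F /defT [h1|h2] hv; last exact: sat2.
  by case: (sat1 _ _ h1) => _ _ [-> _].
- move=> H; exists (fun s F => T s F /\ s V <> v), (fun s F => T s F /\ s V = v).
  split; [|split].
  + move=> s F; split=> [hT|[] []//].
    by case: (eqVneq (s V) v) => [e|/eqP ne]; [right|left].
  + by move=> s F [_ ne] /(_ s F (conj erefl erefl)).
  + by apply/hP => s F [hT hv]; apply: H.
Qed.

Lemma sat_FTop T : sat (FTop sg) T.
Proof.
set w := ran_wit (dom_wit sg).
by have [_] := pointwise_FImp_FEq w (pointwise_FEq w) T; apply.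
Qed.

Lemma sat_foldl_FAnd (A : eqType) (f : A -> form sg) phi (l : seq A) T :
  sat (foldl (@FAnd sg) phi (map f l)) T <->
  sat phi T /\ forall x, x \in l -> sat (f x) T.
Proof.
elim: l phi => [|y l IH] phi /=; first by split=> [|[]].
rewrite IH /=; split=> [[[hphi hy] hl] | [hphi hl]]; split=> //.
- by move=> x; rewrite in_cons => /orP[/eqP-> | /hl].
- by split=> //; apply: hl; apply: mem_head.
- by move=> x hx; apply: hl; rewrite in_cons hx orbT.
Qed.

Lemma pointwise_bigAnd (A : eqType) (f : A -> form sg) P (l : seq A) :
  (forall x, pointwise (f x) (P x)) ->
  pointwise (bigAnd (map f l)) (fun s F => forall x, x \in l -> P x s F).
Proof.
move=> hf T; case: l => [|y l] /=; first by split=> // _; apply: sat_FTop.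
rewrite sat_foldl_FAnd; split=> [[hy hl] s F hT x | H].
  by rewrite in_cons => /orP[/eqP-> | /hl /hf]; [move/hf: hy | ]; apply.
split; first by apply/hf => s F /H; apply; apply: mem_head.
by move=> x hx; apply/hf => s F /H; apply; rewrite in_cons hx orbT.
Qed.

Lemma pointwise_FCf_FEq ant X (x : Rn X) : ~~ inconsistent ant ->
  pointwise (FCf ant (FEq x)) (fun s F => asg_int ant F s X = x).
Proof.
move=> /negbTE consistent T /=; rewrite consistent; split.
- by case=> // H s F hT; apply: (H _ (sys_int ant F)); exists s, F.
- by move=> H; right=> _ _ [s [F [hT [-> _]]]]; apply: H.
Qed.

Lemma lit_at_Tagged (t : asg sg) X V :
  lit_at V (Tagged Rn (t X)) = if X == V then Some (t V) else None.
Proof. by rewrite /lit_at /=; case: (X =P V) => // e; subst. Qed.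

Lemma lookup_map_Tagged (t : asg sg) (r : seq D) V :
  lookup [seq Tagged Rn (t X) | X <- r] V = if V \in r then Some (t V) else None.
Proof.
elim: r => //= X r IH; rewrite lit_at_Tagged in_cons IH eq_sym.
by case: (V == X).
Qed.

Lemma lookup_ant_except V u X :
  lookup (ant_except V u) X = if X != V then Some (u X) else None.
Proof. by rewrite (lookup_map_Tagged (fun Y => u Y)) mem_filter mem_enum andbT. Qed.

Lemma ant_except_consistent V u : ~~ inconsistent (ant_except V u).
Proof.
apply/hasPn => _ /mapP [X _ ->]; apply/hasPn => _ /mapP [Y _ ->] /=.
by apply/negP => /andP [/eqP eXY]; subst Y; rewrite eqxx.
Qed.

Lemma recursive_PA_irrefl G V : recursive G -> V \in En G -> V \notin PA G V.
Proof. by move=> [r Hr] hV; apply/negP => /(Hr V V hV); rewrite ltnn. Qed.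

Lemma restr_eq (t t' : asg sg) (P : {set D}) :
  {in P, forall X, t X = t' X} -> restr t P = restr t' P.
Proof. by move=> tt'; apply/ffunP => -[X hX]; rewrite !ffunE; apply: tt'. Qed.

(* [asg_int] iterates [#|D|] steps: the first one sets every X != V to u X,
   the last one recomputes V from these values (when #|D| = 1, V has no
   parents). *)
Lemma asg_int_ant_except G s V u : recursive G ->
  asg_int (ant_except V u) G s V =
  if V \in En G then @Fn _ G V (restr (fun X => u X) (PA G V)) else s V.
Proof.
move=> recG; rewrite /asg_int; set step := int_step _ G s.
have set_off n X : X != V -> iter n.+1 step s X = u X.
  by move=> hX; rewrite iterS /step /int_step lookup_ant_except hX.
have : 0 < #|D| by apply/card_gt0P; exists (dom_wit sg).
case cardD: #|D| => [//|n] _.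
rewrite iterS {1}/step /int_step lookup_ant_except eqxx /=.
case: ifP => // hV; congr (@Fn _ G V _); apply: restr_eq => X hX.
have XV : X != V by apply: contraTneq hX => ->; apply: recursive_PA_irrefl.
have : 1 < #|D| by apply/card_gt1P; exists X, V.
by rewrite cardD; case: n {cardD} => [//|n] _; apply: set_off.
Qed.

Lemma constbP G V :
  reflect (forall p q : ranset (PA G V), @Fn _ G V p = @Fn _ G V q) (constb G V).
Proof.
apply: (iffP forallP) => [cst p q | cst p]; first exact/eqP/(forallP (cst p)).
by apply/forallP => q; apply/eqP/cst.
Qed.

Definition Phi_val F s u V : Rn V :=
  if nonconst F V then @Fn _ F V (restr (fun X => u X) (PA F V)) else s V.

Lemma asg_int_compatible G s u V : recursive G -> compatible s G ->
  asg_int (ant_except V u) G s V = Phi_val G s u V.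
Proof.
move=> recG cmpG; rewrite asg_int_ant_except // /Phi_val /nonconst.
case: ifP => //= hV; case: constbP => //= cst.
by rewrite (cmpG V hV); apply: cst.
Qed.

Lemma pointwise_Phi_at F V :
  pointwise (if nonconst F V then eta F V else xi V)
    (fun s G => forall u, asg_int (ant_except V u) G s V = Phi_val F s u V).
Proof.
rewrite /Phi_val; case: (nonconst F V).
  apply: pointwise_iff.
    by apply: pointwise_bigAnd => u; apply/pointwise_FCf_FEq/ant_except_consistent.
  by move=> s G; split=> H u => [|_]; apply: H; rewrite mem_enum.
rewrite /xi -(map_allpairs
  (fun p => FImp (FEq p.1) (FCf (ant_except V p.2) (FEq p.1))) pair).
apply: pointwise_iff.
  apply: pointwise_bigAnd => p; apply/pointwise_FImp_FEq.
  exact/pointwise_FCf_FEq/ant_except_consistent.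
move=> s G; split=> [H u | H [v u] _ /= <-]; last exact: H.
by apply: (H (s V, u)) => //; apply: allpairs_f; rewrite mem_enum.
Qed.

Lemma pointwise_Phi F :
  pointwise (Phi F)
    (fun s G => forall V u, asg_int (ant_except V u) G s V = Phi_val F s u V).
Proof.
apply: pointwise_iff (pointwise_bigAnd _ (pointwise_Phi_at F)) _ => s G.
by split=> H V; [apply: H; rewrite mem_enum | move=> _; apply: H].
Qed.

Definition extend (P : {set D}) (p : ranset P) (d : asg sg) : fasg sg :=
  [ffun X => if @idP (X \in P) is ReflectT h then p (exist _ X h) else d X].

Lemma extend_in P (p : ranset P) d X (h : X \in P) : extend p d X = p (exist _ X h).
Proof.
rewrite ffunE; destruct idP as [h'|nh]; last by case: nh.
by rewrite (bool_irrelevance h h').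
Qed.

Lemma extend_out P (p : ranset P) d X : X \notin P -> extend p d X = d X.
Proof. by move=> nh; rewrite ffunE; destruct idP as [h|] => //; case/negP: nh. Qed.

Lemma restr_extend P (p : ranset P) d : restr (fun X => extend p d X) P = p.
Proof. by apply/ffunP => -[X h]; rewrite ffunE extend_in. Qed.

Lemma restr_extend_agree P Q (p : ranset P) (q : ranset Q) d :
  (forall X (hP : X \in P) (hQ : X \in Q), p (exist _ X hP) = q (exist _ X hQ)) ->
  restr (fun X => extend p (fun Y => extend q d Y) X) Q = q.
Proof.
move=> agree; apply/ffunP => -[X hQ]; rewrite ffunE /=.
case: (boolP (X \in P)) => hP; first by rewrite (extend_in _ _ hP) agree.
by rewrite extend_out // (extend_in _ _ hQ).
Qed.

Lemma nonconst_Phi_val F G s V :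
  (forall u, Phi_val F s u V = Phi_val G s u V) -> nonconst F V -> nonconst G V.
Proof.
move=> eqFG ncF; apply/negPn/negP => ncG.
have Fn_s p : @Fn _ F V p = s V.
  by have := eqFG (extend p s); rewrite /Phi_val ncF (negbTE ncG) restr_extend.
by move: ncF => /andP[_ /constbP]; apply=> p q; rewrite !Fn_s.
Qed.

Lemma Phi_valP F G s V :
  (forall u, Phi_val F s u V = Phi_val G s u V) <->
  nonconst F V = nonconst G V /\ (nonconst F V -> simV F G V).
Proof.
split=> [eqFG | [ncFG simFG] u].
  have ncFG : nonconst F V = nonconst G V.
    by apply/idP/idP; apply: nonconst_Phi_val => // u.
  split=> // ncF p q agree.
  have := eqFG (extend p (fun X => extend q s X)).
  by rewrite /Phi_val -ncFG ncF restr_extend restr_extend_agree.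
rewrite /Phi_val -ncFG; case: ifP => // ncF.
by apply: simFG => // X h1 h2; rewrite !ffunE.
Qed.

Lemma simsys_Phi_val F G s :
  simsys F G <-> forall V u, Phi_val F s u V = Phi_val G s u V.
Proof.
split=> [[ncFG simFG] V | eqFG].
  by apply/Phi_valP; split; [apply: ncFG | apply: simFG].
by split=> V; case: (Phi_valP F G s V) => /(_ (eqFG V)) [].
Qed.

Let wit : asg sg := fun X => ran_wit X.

Lemma simsys_sym F G : simsys F G -> simsys G F.
Proof.
move=> /(simsys_Phi_val _ _ wit) eqFG.
by apply/(simsys_Phi_val _ _ wit) => V u; rewrite eqFG.
Qed.

Lemma simsys_trans F G H : simsys F G -> simsys G H -> simsys F H.
Proof.
move=> /(simsys_Phi_val _ _ wit) eqFG /(simsys_Phi_val _ _ wit) eqGH.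
by apply/(simsys_Phi_val _ _ wit) => V u; rewrite eqFG eqGH.
Qed.

Lemma sat_PhiP F T : gcteam T -> sat (Phi F) T <-> forall s G, T s G -> simsys G F.
Proof.
move=> gcT; rewrite pointwise_Phi; split=> H s G hT; have [recG cmpG] := gcT s G hT.
  by apply/(simsys_Phi_val G F s) => V u; rewrite -asg_int_compatible //; apply: H.
move: (H s G hT) => /(simsys_Phi_val G F s) eqGF V u.
by rewrite asg_int_compatible.
Qed.

End Uniformity.

Theorem corollary3p5 (sg : signature) (T : team sg) :
  gcteam T -> (sat_bigsqcup_Phi T <-> uniform T).
Proof.
move=> gcT; split=> [[F [_ /(sat_PhiP F gcT) simF]] | unifT].
  by move=> s G t H hs ht; apply: simsys_trans (simF s G hs) (simsys_sym (simF t H ht)).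
have [[s0 [G0 h0]] | emptyT] := classic (exists s G, T s G).
  exists G0; split; first exact: (gcT _ _ h0).1.
  by apply/sat_PhiP => // s G hs; apply: unifT hs h0.
exists (@Sys sg set0 (fun _ => set0) (fun V _ => ran_wit V)); split.
  by exists (fun _ => 0) => V Y; rewrite inE.
by apply/sat_PhiP => // s G hs; case: emptyT; exists s, G.
Qed.
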